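(* Let $\Lambda\subseteq\mathbb Z^D$ be a lattice inducing a lattice tiling of the shape $\mathcal S$, with $n=|\mathcal S|$. Let $\delta$ be a nonzero ternary vector such that $(\Lambda,\mathcal S,\delta)$ defines a folding, with folded-row $p_0,p_1,\dots$. Let $E\subseteq\mathbb Z_n$ be a $B_2$-sequence over $\mathbb Z_n$, and identify each $a\in E$ with its representative in $\{0,1,\dots,n-1\}$. Then: <ol> <li>The set of dots $\{p_a : a\in E\}\subseteq\mathcal S$ (the $B_2$-sequence placed along the folded-row) is a $D$-dimensional DDC.</li> <li>The set $X=\{a\delta+\lambda : a\in E,\ \lambda\in\Lambda\}$ is an infinite $\mathcal S$-DDC with $|E|$ dots, and $X\cap\mathcal S=\{p_a:a\in E\}$.</li> </ol>
   Context: Let $D\ge 1$. A shape is a finite nonempty set $\mathcal S\subset\mathbb Z^D$ containing the origin; the origin is its distinguished center point. A lattice is a set $\Lambda=\{\sum_{j=1}^D u_jv_j : u_1,\dots,u_D\in\mathbb Z\}$ for linearly independent $v_1,\dots,v_D\in\mathbb Z^D$. $\Lambda$ induces a lattice tiling of $\mathcal S$ if the translates $\mathcal S+\lambda$, $\lambda\in\Lambda$, are pairwise disjoint and cover $\mathbb Z^D$. The translate $\mathcal S+\lambda$ is called the copy of $\mathcal S$ with center $\lambda$. For $x\in\mathbb Z^D$, $c(x)$ denotes the unique $\lambda\in\Lambda$ with $x\in\mathcal S+\lambda$. A ternary vector (direction) is a nonzero $\delta\in\{-1,0,+1\}^D$. The folded-row of $(\Lambda,\mathcal S,\delta)$ is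 the sequence $p_0,p_1,p_2,\dots$ defined by $p_0=0$ and $p_{k+1}=(p_k+\delta)-c(p_k+\delta)$. The triple $(\Lambda,\mathcal S,\delta)$ defines a folding if every element of $\mathcal S$ occurs in its folded-row. A subset $E=\{a_1,\dots,a_m\}$ of an abelian group $A$ (with distinct elements) is a $B_2$-sequence over $A$ if all sums $a_{i_1}+a_{i_2}$ with $1\le i_1\le i_2\le m$ are distinct. A finite set $Y\subseteq\mathbb Z^D$ (''dots'') is a distinct difference configuration (DDC) if the vectors $y-y'$, over ordered pairs $(y,y')$ of distinct points of $Y$, are pairwise distinct. A set $X\subseteq\mathbb Z^D$ is an infinite $\mathcal S$-DDC with $m$ dots if for every $t\in\mathbb Z^D$ the set $X\cap(\mathcal S+t)$ has exactly $m$ elements and is a DDC. *)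

From HB Require Import structures.
From mathcomp Require Import all_boot all_order all_algebra.
From Stdlib Require Import ClassicalEpsilon.
Set Implicit Arguments. Unset Strict Implicit. Unset Printing Implicit Defensive.
Import Order.TTheory GRing.Theory Num.Theory.
Local Open Scope ring_scope.

Definition vec (D : nat) := 'rV[int]_D.

(* The lattice with basis v_1..v_D given as the rows of B:
   { sum_j u_j v_j : u in Z^D } = { u *m B }. *)
Definition in_lattice (D : nat) (B : 'M[int]_D) (x : vec D) : Prop :=
  exists u : 'rV[int]_D, x = u *m B.

Definition lin_indep (D : nat) (B : 'M[int]_D) : Prop :=
  forall u : 'rV[int]_D, u *m B = 0 -> u = 0.

Definition is_shape (D : nat) (S : seq (vec D)) : Prop :=
  uniq S /\ (0 : vec D) \in S.

Definition lattice_tiling (D : nat) (B : 'M[int]_D) (S : seq (vec D)) : Prop :=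
  (forall x : vec D, exists l, in_lattice B l /\ x \in [seq s + l | s <- S]) /\
  (forall l1 l2 : vec D, in_lattice B l1 -> in_lattice B l2 -> l1 != l2 ->
     forall x, x \in [seq s + l1 | s <- S] -> x \notin [seq s + l2 | s <- S]).

(* c(x): the (unique, under tiling) lattice point lambda with x in S + lambda. *)
Definition center (D : nat) (B : 'M[int]_D) (S : seq (vec D)) (x : vec D) : vec D :=
  epsilon (inhabits (0 : vec D))
    (fun l => in_lattice B l /\ x \in [seq s + l | s <- S]).

Definition ternary (D : nat) (d : vec D) : Prop :=
  d != 0 /\ forall i : 'I_D, d 0 i \in [:: -1; 0; 1].

Fixpoint folded_row (D : nat) (B : 'M[int]_D) (S : seq (vec D)) (d : vec D)
    (k : nat) : vec D :=
  match k with
  | 0 => 0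
  | k'.+1 => let y := folded_row B S d k' + d in y - center B S y
  end.

Definition folding (D : nat) (B : 'M[int]_D) (S : seq (vec D)) (d : vec D) : Prop :=
  forall s, s \in S -> exists k, folded_row B S d k = s.

Definition B2_seq (n : nat) (E : seq nat) : Prop :=
  uniq E /\ all (fun a => (a < n)%N) E /\
  forall i1 i2 j1 j2 : nat,
    (i1 <= i2 < size E)%N -> (j1 <= j2 < size E)%N ->
    (nth 0 E i1 + nth 0 E i2 == nth 0 E j1 + nth 0 E j2 %[mod n])%N ->
    i1 = j1 /\ i2 = j2.

Definition is_DDC (D : nat) (Y : seq (vec D)) : Prop :=
  forall y1 y2 y3 y4, y1 \in Y -> y2 \in Y -> y3 \in Y -> y4 \in Y ->
    y1 != y2 -> y3 != y4 -> y1 - y2 = y3 - y4 -> y1 = y3 /\ y2 = y4.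

Definition infinite_DDC (D : nat) (S : seq (vec D)) (X : vec D -> Prop) (m : nat)
  : Prop :=
  forall t : vec D, exists Y : seq (vec D),
    uniq Y /\ (forall y, y \in Y <-> (X y /\ y \in [seq s + t | s <- S])) /\
    size Y = m /\ is_DDC Y.

From HB Require Import structures.
From mathcomp Require Import all_boot all_order all_algebra.
From Stdlib Require Import ClassicalEpsilon.
Set Implicit Arguments. Unset Strict Implicit. Unset Printing Implicit Defensive.
Import Order.TTheory GRing.Theory Num.Theory.
Local Open Scope ring_scope.

(* Write x ~ y when x - y lies in the lattice Lambda.  Because the copies
   S + lambda tile Z^D, every point has a representative congruent to it in
   any translate S + t of the shape, and two congruent points of S + t are
   equal.  The folded-row point p_k is the representative of k*delta in S.
   The heart of the proof is [folding_multiples]: if z*delta is in Lambda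
   then n = |S| divides z.  Indeed the least m > 0 with m*delta in Lambda
   divides every such z, the points p_0, ..., p_(m-1) are pairwise distinct,
   and by the folding hypothesis and the m-periodicity of k |-> p_k they
   exhaust S, so m = n.  Hence for any choice of points f(a) ~ a*delta
   (a in E), an equation f(a) - f(b) = f(c) - f(e) yields
   a + e = c + b (mod n), and the B_2 property forces (a, b) = (c, e) or
   a = b: the points f(a) form a DDC ([representatives_DDC]).  Part 1 takes
   f(a) = p_a; part 2 takes for f(a) the representative of a*delta in S + t,
   which by [periodic_dots_in_translate] are exactly the points of X in
   S + t. *)

Lemma least_nat (P : nat -> Prop) :
  (exists n, P n) -> exists m, P m /\ forall k, P k -> (m <= k)%N.
Proof.
move=> [n Pn]; pose b k := if excluded_middle_informative (P k) then true else false.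
have bP k : reflect (P k) (b k).
  by rewrite /b; case: excluded_middle_informative => h; constructor.
have exb : exists n, b n by exists n; apply/bP.
by case: (ex_minnP exb) => m /bP Pm min_m; exists m; split=> // k /bP /min_m.
Qed.

Lemma dvdz_eqn_mod (n x y : nat) : (n%:Z %| x%:Z - y%:Z)%Z -> (x = y %[mod n])%N.
Proof. by rewrite -eqz_mod_dvd !modz_nat => /eqP [->]. Qed.

Section LatticeCongruence.
Variables (D : nat) (B : 'M[int]_D).

Lemma lattice0 : in_lattice B 0.
Proof. by exists 0; rewrite mul0mx. Qed.

Lemma latticeD x y : in_lattice B x -> in_lattice B y -> in_lattice B (x + y).
Proof. by move=> [u ->] [v ->]; exists (u + v); rewrite mulmxDl. Qed.

Lemma latticeN x : in_lattice B x -> in_lattice B (- x).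
Proof. by move=> [u ->]; exists (- u); rewrite mulNmx. Qed.

Lemma latticeMz x (z : int) : in_lattice B x -> in_lattice B (x *~ z).
Proof. by move=> [u ->]; exists (u *~ z); rewrite -!scaler_int scalemxAl. Qed.

Definition lcong (x y : vec D) : Prop := in_lattice B (x - y).

Lemma lcong_refl x : lcong x x.
Proof. by rewrite /lcong subrr; apply: lattice0. Qed.

Lemma lcong_sym x y : lcong x y -> lcong y x.
Proof. by move=> h; rewrite /lcong -opprB; apply: latticeN. Qed.

Lemma lcong_trans x y z : lcong x y -> lcong y z -> lcong x z.
Proof. by move=> h1 h2; have := latticeD h1 h2; rewrite /lcong addrA subrK. Qed.

Lemma lcong_add x y x' y' : lcong x x' -> lcong y y' -> lcong (x + y) (x' + y').
Proof. by move=> h1 h2; have := latticeD h1 h2; rewrite /lcong opprD addrACA. Qed.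

Lemma lcong_sub x y x' y' : lcong x x' -> lcong y y' -> lcong (x - y) (x' - y').
Proof.
move=> h1 /latticeN h2; apply: lcong_add h1 _.
by rewrite /lcong opprK addrC -opprB.
Qed.

Lemma lcong_lattice x l : in_lattice B l -> lcong (x + l) x.
Proof. by rewrite /lcong addrC addKr. Qed.

Lemma lcong_mulrn (d : vec D) (i j : nat) :
  lcong (d *+ i) (d *+ j) <-> in_lattice B (d *~ (i%:Z - j%:Z)).
Proof. by rewrite /lcong mulrzBr. Qed.

Lemma least_period_dvd (d : vec D) (m : nat) :
  (0 < m)%N -> in_lattice B (d *+ m) ->
  (forall k, (0 < k)%N -> in_lattice B (d *+ k) -> (m <= k)%N) ->
  forall z : int, in_lattice B (d *~ z) -> (m%:Z %| z)%Z.
Proof.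
move=> m_gt0 hm hmin z hz; apply/dvdz_mod0P.
have m_neq0 : m%:Z != 0 by rewrite eqz_nat -lt0n.
have [r def_r] : exists r : nat, (z %% m)%Z = r.
  by exists `|(z %% m)%Z|%N; rewrite gez0_abs ?modz_ge0.
have lt_rm : (r < m)%N by have := ltz_mod z m_neq0; rewrite def_r ltz_nat.
have hr : in_lattice B (d *+ r).
  suff -> : d *+ r = d *~ z - (d *+ m) *~ (z %/ m)%Z.
    exact: latticeD hz (latticeN (latticeMz _ hm)).
  by rewrite {1}(divz_eq z m) mulrzDr !pmulrn mulrzA_C -def_r addrAC subrr add0r.
rewrite def_r; case: r lt_rm hr {def_r} => // r lt_rm hr.
by have := hmin r.+1 isT hr; rewrite leqNgt lt_rm.
Qed.

End LatticeCongruence.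

Lemma mem_translate D (S : seq (vec D)) (t y : vec D) :
  (y \in [seq s + t | s <- S]) = (y - t \in S).
Proof. by rewrite -{1}(subrK t y) (mem_map (addIr t)). Qed.

Section Tiling.
Variables (D : nat) (B : 'M[int]_D) (S : seq (vec D)).
Hypotheses (shapeS : is_shape S) (tilingS : lattice_tiling B S).

Lemma center_spec x : in_lattice B (center B S x) /\ x - center B S x \in S.
Proof.
rewrite -mem_translate /center.
apply: (epsilon_spec _ (fun l => in_lattice B l /\ x \in [seq s + l | s <- S])).
exact: tilingS.1.
Qed.

Lemma tile_congr (t x y : vec D) :
  x - t \in S -> y - t \in S -> lcong B x y -> x = y.
Proof.
move=> xS yS xy; apply/eqP; apply: contraT => neq_xy.
have hl : in_lattice B ((x - t) - (y - t)) := lcong_sub xy (lcong_refl B t).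
have /tilingS.2 : (0 : vec D) != (x - t) - (y - t).
  by rewrite eq_sym subr_eq0; apply: contra neq_xy => /eqP/addIr ->.
move=> /(_ (lattice0 B) hl (x - t)); rewrite !mem_translate subr0 xS subKr.
by rewrite yS => /(_ isT).
Qed.

Definition rep (t x : vec D) : vec D := x - center B S (x - t).

Lemma rep_spec t x : rep t x - t \in S /\ lcong B (rep t x) x.
Proof.
have [hc hS] := center_spec (x - t); split.
  by rewrite /rep addrAC.
by rewrite /lcong /rep addrAC subrr add0r; apply: latticeN.
Qed.

Variable d : vec D.
Local Notation p := (folded_row B S d).

Lemma folded_row_spec k : p k \in S /\ lcong B (p k) (d *+ k).
Proof.
elim: k => [|k [_ IH]].
  by split; [exact: shapeS.2 | rewrite mulr0n; apply: lcong_refl].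
have -> : p k.+1 = rep 0 (p k + d) by rewrite /= /rep subr0.
have [inS cong] := rep_spec 0 (p k + d); rewrite subr0 in inS; split => //.
apply: lcong_trans cong _; rewrite mulrSr.
by have := lcong_sub IH (lcong_refl B (- d)); rewrite !opprK.
Qed.

Lemma folded_row_eq i j : p i = p j <-> lcong B (d *+ i) (d *+ j).
Proof.
have [iS ci] := folded_row_spec i; have [jS cj] := folded_row_spec j.
split=> [eq_ij | cij].
  by apply: lcong_trans (lcong_sym ci) _; rewrite eq_ij.
apply: (@tile_congr 0); rewrite ?subr0 //.
exact: lcong_trans ci (lcong_trans cij (lcong_sym cj)).
Qed.

(* Pigeonhole: among p_0, ..., p_n two points coincide, so some positive
   multiple of delta lies in the lattice. *)
Lemma period_exists : exists2 K, (0 < K)%N & in_lattice B (d *+ K).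
Proof.
set P := [seq p i | i <- iota 0 (size S).+1].
have /(uniqPn 0) [i [j [lt_ij lt_j eq_ij]]] : ~~ uniq P.
  apply/negP => uP.
  have sub : {subset P <= S} by move=> y /mapP [k _ ->]; exact: (folded_row_spec k).1.
  by have := uniq_leq_size uP sub; rewrite size_map size_iota ltnn.
rewrite size_map size_iota in lt_j.
have lt_i := ltn_trans lt_ij lt_j.
rewrite !(nth_map 0%N) ?size_iota // !nth_iota // in eq_ij.
exists (j - i)%N; first by rewrite subn_gt0.
by rewrite mulrnBr ?(ltnW lt_ij) //; apply: lcong_sym; apply/folded_row_eq.
Qed.

Hypothesis foldingS : folding B S d.

(* If m is the least period of the direction, the folded row consists of
   exactly the m distinct points p_0, ..., p_(m-1), so m = |S|. *)
Lemma least_period_size (m : nat) :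
  (0 < m)%N -> in_lattice B (d *+ m) ->
  (forall k, (0 < k)%N -> in_lattice B (d *+ k) -> (m <= k)%N) ->
  m = size S.
Proof.
move=> m_gt0 hm hmin; have m_dvd := least_period_dvd m_gt0 hm hmin.
set P := [seq p i | i <- iota 0 m].
have uP : uniq P.
  rewrite map_inj_in_uniq ?iota_uniq // => i j; rewrite !mem_iota /= => lt_im lt_jm.
  move/folded_row_eq/lcong_mulrn/m_dvd/dvdz_eqn_mod.
  by rewrite !modn_small.
have PS : P =i S.
  move=> y; apply/mapP/idP => [[k _ ->] | /foldingS [k <-]].
    exact: (folded_row_spec k).1.
  exists (k %% m)%N; first by rewrite mem_iota ltn_pmod.
  apply/folded_row_eq; rewrite {1}(divn_eq k m) addnC mulrnDr mulnC mulrnA.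
  exact: (lcong_lattice _ (latticeMz (k %/ m)%N hm)).
by rewrite -(perm_size (uniq_perm uP shapeS.1 PS)) size_map size_iota.
Qed.

Lemma folding_multiples (z : int) : in_lattice B (d *~ z) -> ((size S)%:Z %| z)%Z.
Proof.
have [K K_gt0 hK] := period_exists.
have [m [[m_gt0 hm] hmin]] :=
  least_nat (ex_intro (fun k => (0 < k)%N /\ in_lattice B (d *+ k)) K (conj K_gt0 hK)).
have hmin' k : (0 < k)%N -> in_lattice B (d *+ k) -> (m <= k)%N by move=> *; exact: hmin.
rewrite -(least_period_size m_gt0 hm hmin'); exact: least_period_dvd.
Qed.

Lemma folding_multiples_mod (i j : nat) :
  lcong B (d *+ i) (d *+ j) -> (i = j %[mod size S])%N.
Proof. by move/lcong_mulrn/folding_multiples/dvdz_eqn_mod. Qed.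
End Tiling.

Section B2Sequences.
Variables (n : nat) (E : seq nat).
Hypothesis B2E : B2_seq n E.

Lemma B2_index_sums i1 i2 j1 j2 :
  (i1 < size E)%N -> (i2 < size E)%N -> (j1 < size E)%N -> (j2 < size E)%N ->
  (nth 0 E i1 + nth 0 E i2 = nth 0 E j1 + nth 0 E j2 %[mod n])%N ->
  (i1 = j1 /\ i2 = j2) \/ (i1 = j2 /\ i2 = j1).
Proof.
have [_ [_ hB]] := B2E.
wlog le_i : i1 i2 / (i1 <= i2)%N => [sym | ].
  case: (leqP i1 i2) => [/sym // | /ltnW le_21] lt1 lt2 lt3 lt4.
  rewrite addnC => /(sym _ _ le_21 lt2 lt1 lt3 lt4).
  by case=> [[-> ->] | [-> ->]]; [right | left].
wlog le_j : j1 j2 / (j1 <= j2)%N => [sym | ].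
  case: (leqP j1 j2) => [/sym // | /ltnW le_21] lt1 lt2 lt3 lt4.
  rewrite [in X in _ = X %[mod _]]addnC => /(sym _ _ le_21 lt1 lt2 lt4 lt3).
  by case=> [[-> ->] | [-> ->]]; [right | left].
move=> _ lt2 _ lt4 /eqP eq_sums; left; apply: hB eq_sums; exact/andP.
Qed.

Lemma B2_sums a b c e : a \in E -> b \in E -> c \in E -> e \in E ->
  (a + b = c + e %[mod n])%N -> (a = c /\ b = e) \/ (a = e /\ b = c).
Proof.
move=> aE bE cE eE; rewrite -(nth_index 0 aE) -(nth_index 0 bE).
rewrite -(nth_index 0 cE) -(nth_index 0 eE).
move/B2_index_sums; rewrite !index_mem => /(_ aE bE cE eE).
by case=> [[-> ->] | [-> ->]]; [left | right].
Qed.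

Lemma B2_mod_inj a b : a \in E -> b \in E -> (a = b %[mod n])%N -> a = b.
Proof.
have [_ [lt_n _]] := B2E.
by move=> aE bE; rewrite !modn_small ?(allP lt_n).
Qed.
End B2Sequences.

Lemma sub_eq_sub_addr (V : zmodType) (x y z w : V) : x - y = z - w -> x + w = z + y.
Proof. by move=> h; rewrite -(subrK y x) h addrAC subrK. Qed.

Definition periodic_dots D (B : 'M[int]_D) (d : vec D) (E : seq nat) (y : vec D) : Prop :=
  exists2 a, a \in E & exists l, in_lattice B l /\ y = d *+ a + l.

Section Representatives.
Variables (D : nat) (B : 'M[int]_D) (S : seq (vec D)) (d : vec D) (E : seq nat).
Hypotheses (shapeS : is_shape S) (tilingS : lattice_tiling B S).
Hypotheses (foldingS : folding B S d) (B2E : B2_seq (size S) E).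

Variable f : nat -> vec D.
Hypothesis f_cong : forall a, a \in E -> lcong B (f a) (d *+ a).

Lemma representatives_diff a b c e : a \in E -> b \in E -> c \in E -> e \in E ->
  f a - f b = f c - f e -> (a + e = c + b %[mod size S])%N.
Proof.
move=> aE bE cE eE /sub_eq_sub_addr eq_sum.
apply: (folding_multiples_mod shapeS tilingS foldingS); rewrite !mulrnDr.
apply: lcong_trans (lcong_add (lcong_sym (f_cong aE)) (lcong_sym (f_cong eE))) _.
by rewrite eq_sum; exact: lcong_add (f_cong cE) (f_cong bE).
Qed.

Lemma representatives_uniq : uniq [seq f a | a <- E].
Proof.
rewrite map_inj_in_uniq; first exact: B2E.1.
move=> a b aE bE eq_f.
apply: (B2_mod_inj B2E aE bE); apply: (folding_multiples_mod shapeS tilingS foldingS).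
by apply: lcong_trans (lcong_sym (f_cong aE)) _; rewrite eq_f; exact: f_cong.
Qed.

Lemma representatives_DDC : is_DDC [seq f a | a <- E].
Proof.
move=> _ _ _ _ /mapP [a aE ->] /mapP [b bE ->] /mapP [c cE ->] /mapP [e eE ->] neq_ab _.
move=> /(representatives_diff aE bE cE eE) /(B2_sums B2E aE eE cE bE).
by case=> [[-> ->] // | [eq_ab _]]; rewrite eq_ab eqxx in neq_ab.
Qed.

Lemma periodic_dots_in_translate (t : vec D) :
  (forall a, a \in E -> f a - t \in S) ->
  forall y, (periodic_dots B d E y /\ y - t \in S) <-> y \in [seq f a | a <- E].
Proof.
move=> f_in y; split => [[[a aE [l [hl ->]]] yS] | /mapP [a aE ->]].
  apply/mapP; exists a => //; apply: (tile_congr tilingS yS (f_in a aE)).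
  exact: lcong_trans (lcong_lattice _ hl) (lcong_sym (f_cong aE)).
split; last exact: f_in.
by exists a => //; exists (f a - d *+ a); split; [exact: f_cong | rewrite addrC subrK].
Qed.
End Representatives.

Theorem mainTheorem9 (D : nat) (B : 'M[int]_D) (S : seq (vec D)) (d : vec D)
    (E : seq nat) :
  (0 < D)%N ->
  lin_indep B ->
  is_shape S ->
  lattice_tiling B S ->
  ternary d ->
  folding B S d ->
  B2_seq (size S) E ->
  let p := folded_row B S d in
  (all (fun y => y \in S) [seq p a | a <- E] /\ is_DDC [seq p a | a <- E]) /\
  (infinite_DDC S
     (fun y => exists2 a, a \in E & exists l, in_lattice B l /\ y = d *+ a + l)
     (size E) /\
   (forall y, ((exists2 a, a \in E & exists l, in_lattice B l /\ y = d *+ a + l)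
               /\ y \in S) <-> y \in [seq p a | a <- E])).
Proof.
move=> _ _ shapeS tilingS _ foldingS B2E p.
have p_spec a : p a \in S /\ lcong B (p a) (d *+ a) := folded_row_spec shapeS tilingS d a.
have p_cong a (_ : a \in E) := (p_spec a).2.
split; [split | split].
- by apply/allP => _ /mapP [a _ ->]; exact: (p_spec a).1.
- exact: (representatives_DDC shapeS tilingS foldingS B2E p_cong).
- move=> t; pose q a := rep B S t (d *+ a).
  have q_cong a (_ : a \in E) := (rep_spec tilingS t (d *+ a)).2.
  have q_in a (_ : a \in E) := (rep_spec tilingS t (d *+ a)).1.
  exists [seq q a | a <- E]; split.
    exact: (representatives_uniq shapeS tilingS foldingS B2E q_cong).
  split; first by move=> y; rewrite mem_translate (periodic_dots_in_translate tilingS q_cong q_in).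
  rewrite size_map; split => //.
  exact: (representatives_DDC shapeS tilingS foldingS B2E q_cong).
- have p_in a : a \in E -> p a - 0 \in S by rewrite subr0 => _; exact: (p_spec a).1.
  by move=> y; have := periodic_dots_in_translate tilingS p_cong p_in y; rewrite subr0.
Qed.
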